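(* The total number of distinct triples $[x,l,\sigma_l]$ over all steps $l=1,\dots,L$, i.e. $\sum_{l=1}^L|\Psi_l|$, is at most $m\binom{L-1+m}{m}$. In particular, for fixed $m$, this number (and hence the number of elementary operations of the recursive recombination algorithm, which computes $\Psi_{l+1}$ and its probabilities from $\Psi_l$ via the recursion $z=\frac{xl+\sigma_l^2}{l+1}$ for each successor state $\sigma_{l+1}$ and merges equal triples) is $O(L^m)$ as $L\to\infty$.
   Context: $\{\sigma_k\}$ is a Markov chain on $m$ states $\{u_1,\dots,u_m\}$ with fixed initial state $\sigma_0$ and transition matrix $[p_{ij}]$. A subsample path up to step $l$ is $\omega_l=(\sigma_0,\dots,\sigma_l)$ with weight $|\omega_l|=\frac1l\sum_{k=0}^{l-1}\sigma_k^2$; $\Omega_l$ is the set of such paths, and $\Psi_l=\{[|\omega_l|,l,s]:\omega_l\in\Omega_l,\ s\text{ the last element of }\omega_l\}$. *)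

From HB Require Import structures.
From mathcomp Require Import all_boot all_order all_algebra.
Set Implicit Arguments. Unset Strict Implicit. Unset Printing Implicit Defensive.
Import Order.TTheory GRing.Theory Num.Theory.
Local Open Scope ring_scope.

(* Markov chain on m states u_0,...,u_(m-1) (values u : 'I_m -> R),
   transition matrix P, fixed initial state sigma0.
   A subsample path up to step l is omega_l = (sigma_0,...,sigma_l),
   encoded as a finite function 'I_l.+1 -> 'I_m (state indices). *)

Definition path_of (m l : nat) := {ffun 'I_l.+1 -> 'I_m}.

Definition Omega {R : realFieldType} (m : nat) (P : 'M[R]_m) (sigma0 : 'I_m)
  (l : nat) : {set path_of m l} :=
  [set w : path_of m l | (w ord0 == sigma0) &&
     [forall k : 'I_l, 0 < P (w (inord k)) (w (inord k.+1))]].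

Definition weight {R : realFieldType} (m l : nat) (u : 'I_m -> R)
  (w : path_of m l) : R :=
  (l%:R)^-1 * \sum_(k < l) (u (w (inord k))) ^+ 2.

Definition Psi {R : realFieldType} (m : nat) (u : 'I_m -> R) (P : 'M[R]_m)
  (sigma0 : 'I_m) (l : nat) : seq (R * nat * R) :=
  undup [seq (weight u w, l, u (w (inord l))) | w in Omega P sigma0 l].

Definition total_triples {R : realFieldType} (m : nat) (u : 'I_m -> R)
  (P : 'M[R]_m) (sigma0 : 'I_m) (L : nat) : nat :=
  (\sum_(1 <= l < L.+1) size (Psi u P sigma0 l))%N.

From HB Require Import structures.
From mathcomp Require Import all_boot all_order all_algebra.
Import Order.TTheory GRing.Theory Num.Theory.

Set Implicit Arguments.
Unset Strict Implicit.
Unset Printing Implicit Defensive.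

(* Since the initial state sigma_0 is fixed, a path
   (sigma_0, ..., sigma_(k+1)) contributes to Psi_(k+1) the triple
     ((u sigma_0 ^2 + sum_(i=1..k) u sigma_i ^2) / (k+1), k+1, u sigma_(k+1)),
   which depends only on the multiset {sigma_1, ..., sigma_k} of intermediate
   states and on the last state.  Representing a multiset of size k over the
   m = n+1 states by its nondecreasing k-tuple, of which there are
   'C(k + n, n) (card_sorted_tuples), gives |Psi_(k+1)| <= m * 'C(k + n, n).
   Summing over k < L with the hockey-stick identity yields the bound
   m * 'C(L-1 + m, m); the O(L^m) bound follows from 'C(a, m) <= a ^ m and
   L-1 + m <= m * L. *)

Definition middle_states (m k : nat) (w : path_of m k.+1) : k.-tuple 'I_m :=
  [tuple w (inord i.+1) | i < k].

Section Triples.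

Variables (R : realFieldType) (m : nat) (u : 'I_m -> R).

Definition triple_of (s0 : 'I_m) (k : nat) (t : k.-tuple 'I_m) (s : 'I_m)
  : R * nat * R :=
  (((k.+1)%:R)^-1 * (u s0 ^+ 2 + \sum_(x <- t) u x ^+ 2), k.+1, u s)%R.

Lemma weight_middle (k : nat) (w : path_of m k.+1) :
  weight u w =
  (((k.+1)%:R)^-1 * (u (w ord0) ^+ 2 + \sum_(x <- middle_states w) u x ^+ 2))%R.
Proof.
rewrite /weight big_ord_recl big_map big_enum /=; congr (_ * (_ + _))%R.
by congr (u (w _) ^+ 2)%R; apply: val_inj; rewrite /= inordK.
Qed.

Lemma triple_of_perm (s0 : 'I_m) (k : nat) (t t' : k.-tuple 'I_m) (s : 'I_m) :
  perm_eq t t' -> triple_of s0 t s = triple_of s0 t' s.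
Proof. by move=> tt'; rewrite /triple_of (perm_big _ tt'). Qed.

End Triples.

(* Nondecreasing k-tuples of states: canonical representatives of the
   multisets of size k over n+1 states. *)
Definition sorted_tuples (k n : nat) : {set k.-tuple 'I_n.+1} :=
  [set t : k.-tuple 'I_n.+1 | sorted leq (map val t)].

Definition sort_states (k n : nat) (t : k.-tuple 'I_n.+1) : k.-tuple 'I_n.+1 :=
  sort_tuple (fun a b : 'I_n.+1 => (val a <= val b)%N) t.

Lemma sort_states_sorted (k n : nat) (t : k.-tuple 'I_n.+1) :
  sort_states t \in sorted_tuples k n.
Proof.
rewrite inE sorted_map; apply: sort_sorted => a b; exact: leq_total.
Qed.

(* Every triple of Psi_(k+1) is the triple of a canonical multiset of
   intermediate states and a last state, so there are at most
   (n+1) * 'C(k + n, n) of them. *)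
Lemma size_Psi_succ (R : realFieldType) (n : nat) (u : 'I_n.+1 -> R)
  (P : 'M[R]_n.+1) (sigma0 : 'I_n.+1) (k : nat) :
  (size (Psi u P sigma0 k.+1) <= n.+1 * 'C(k + n, n))%N.
Proof.
pose image := [seq triple_of u sigma0 p.1 p.2
              | p <- enum (setX (sorted_tuples k n) [set: 'I_n.+1])].
have size_image : size image = (n.+1 * 'C(k + n, n))%N.
  rewrite size_map -cardE cardsX cardsT card_ord card_sorted_tuples.
  by rewrite -bin_sub ?leq_addr // addKn mulnC.
rewrite -size_image; apply: uniq_leq_size; first exact: undup_uniq.
move=> z; rewrite mem_undup => /mapP [w]; rewrite mem_enum inE.
case/andP => /eqP w0 _ ->; apply/mapP.
exists (sort_states (middle_states w), w (inord k.+1)).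
  by rewrite mem_enum in_setX sort_states_sorted in_setT.
rewrite weight_middle w0 /=.
by rewrite (triple_of_perm _ _ _ (permEl (perm_sort _ _))).
Qed.

Lemma sum_bin_diag (n L : nat) :
  (\sum_(0 <= k < L) 'C(k + n, n) = 'C(L + n, n.+1))%N.
Proof.
elim: L => [|L IH]; first by rewrite big_geq // bin_small.
by rewrite big_nat_recr //= IH addSn binS addnC.
Qed.

Lemma total_triples_bound (R : realFieldType) (m : nat) (u : 'I_m -> R)
  (P : 'M[R]_m) (sigma0 : 'I_m) (L : nat) :
  (total_triples u P sigma0 L <= m * 'C(L.-1 + m, m))%N.
Proof.
case: m u P sigma0 => [|n] u P sigma0; first by case: sigma0.
rewrite /total_triples big_add1 /=.
apply: (@leq_trans (\sum_(0 <= k < L) n.+1 * 'C(k + n, n))).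
  by apply: leq_sum => k _; apply: size_Psi_succ.
rewrite -big_distrr /= sum_bin_diag leq_mul2l; apply/orP; right.
by apply: leq_bin2l; case: L => //= L; rewrite addnS addSn.
Qed.

(* 'C(a, m) <= a ^ m, since 'C(a, m) * m! is the falling factorial a ^_ m. *)
Lemma bin_le_exp (a m : nat) : ('C(a, m) <= a ^ m)%N.
Proof.
apply: (@leq_trans ('C(a, m) * m`!)); first by rewrite leq_pmulr ?fact_gt0.
rewrite bin_ffact ffact_prod -[X in (_ <= a ^ X)%N]card_ord -prod_nat_const.
by apply: leq_prod => i _; apply: leq_subr.
Qed.

Lemma bin_pred_le_pow (m L : nat) :
  (0 < L)%N -> ('C(L.-1 + m, m) <= m ^ m * L ^ m)%N.
Proof.
case: L => [|L] // _; case: m => [|m]; first by rewrite bin0.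
rewrite -expnMn; apply: (leq_trans (bin_le_exp _ _)); rewrite leq_exp2r //=.
by rewrite mulnS [L + _]addnC leq_add2l leq_pmull.
Qed.

Theorem proposition4 (m : nat) :
  (forall (R : realFieldType) (u : 'I_m -> R) (P : 'M[R]_m) (sigma0 : 'I_m),
     injective u ->
     (forall i j, (0 <= P i j)%R) ->
     (forall i, (\sum_(j < m) P i j)%R = 1%R) ->
     forall L : nat,
       (total_triples u P sigma0 L <= m * 'C(L.-1 + m, m))%N)
  /\
  (exists C : nat,
     forall (R : realFieldType) (u : 'I_m -> R) (P : 'M[R]_m) (sigma0 : 'I_m),
       injective u ->
       (forall i j, (0 <= P i j)%R) ->
       (forall i, (\sum_(j < m) P i j)%R = 1%R) ->
       forall L : nat, (1 <= L)%N ->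
         (total_triples u P sigma0 L <= C * L ^ m)%N).
Proof.
split; first by move=> R u P sigma0 _ _ _ L; apply: total_triples_bound.
exists (m * m ^ m)%N => R u P sigma0 _ _ _ L L_gt0.
apply: (leq_trans (total_triples_bound u P sigma0 L)).
by rewrite -mulnA leq_mul2l bin_pred_le_pow ?orbT.
Qed.
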